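(* Let $H\in\mathcal{H}$. Then: \begin{enumerate} \item $H_{reg}$ is an anti-symmetric convex-concave function on $\mathbb{R}^N\times\mathbb{R}^N$ whose restriction to $\bar\Omega\times\bar\Omega$ belongs to $\mathcal{H}$. \item $L_{H_{reg}}$ is convex and continuous in both variables, and $L_{H_{reg}}\le L_H$ on $\bar\Omega\times B_R$. \item $|L_{H_{reg}}(x,p)|\le R\|x\|+R\|p\|+5R^2$ and $|H_{reg}(x,y)|\le R\|x\|+R\|y\|+4R^2$ for all $x,y,p\in\mathbb{R}^N$. \item $L_{H_{reg}}$ and $H_{reg}$ are Lipschitz continuous with Lipschitz constants at most $4NR$. \end{enumerate}
   Context: $\Omega\subset\mathbb{R}^N$ is a bounded domain with $\bar\Omega\subset B_R$, where $B_R$ is the ball of radius $R>0$ centered at the origin. $\mathcal{H}$ is the set of continuous $H$ on $\bar\Omega\times\bar\Omega$ with $H(x,y)=-H(y,x)$. For a continuous $H$ on $\bar\Omega\times\bar\Omega$ define, for $x,p\in\mathbb{R}^N$, $L_H(x,p)=\sup_{y\in\bar\Omega}\{\langle y,p\rangle-H(y,x)\}$ (the same formula defines $L_G$ for any $G$ defined on $\mathbb{R}^N\times\mathbb{R}^N$). Restricted conjugates: $L_H^*(q,y)=\sup_{x\in\bar\Omega,\,p\in B_R}\{\langle y,p\rangle+\langle q,x\rangle-L_H(x,p)\}$ and $L_H^{**}(y,q)=\sup_{x\in\bar\Omega,\,p\in B_R}\{\langle y,p\rangle+\langle q,x\rangle-L_H^*(p,x)\}$ for $y,q\in\mathbb{R}^N$.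 For a function $L$ on $\mathbb{R}^N\times\mathbb{R}^N$, its $B_R$-Hamiltonian is $H_L(x,y)=\sup_{p\in B_R}\{\langle x,p\rangle-L(y,p)\}$. The regularization of $H$ is $H_{reg}(x,y)=\tfrac12\big(H_{L_H^{**}}(x,y)-H_{L_H^{**}}(y,x)\big)$ for $x,y\in\mathbb{R}^N$. *)

From Stdlib Require Fin.
From Stdlib Require Import Reals Lra Classical ClassicalEpsilon.
Open Scope R_scope.

Definition vec (N : nat) := Fin.t N -> R.

Definition vadd {N} (x y : vec N) : vec N := fun i => x i + y i.
Definition vsub {N} (x y : vec N) : vec N := fun i => x i - y i.
Definition vscal {N} (t : R) (x : vec N) : vec N := fun i => t * x i.

Fixpoint dot {N : nat} : vec N -> vec N -> R :=
  match N return vec N -> vec N -> R with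
  | O => fun _ _ => 0
  | S n => fun x y => x Fin.F1 * y Fin.F1
                      + dot (fun i => x (Fin.FS i)) (fun i => y (Fin.FS i))
  end.

Definition norm {N} (x : vec N) : R := sqrt (dot x x).

Definition norm2 {N} (x p : vec N) : R := sqrt (dot x x + dot p p).

Definition ball {N} (rad : R) (p : vec N) : Prop := norm p < rad.

Definition is_open {N} (S : vec N -> Prop) : Prop :=
  forall x, S x -> exists e, 0 < e /\ forall y, norm (vsub y x) < e -> S y.

Definition closure {N} (S : vec N -> Prop) (x : vec N) : Prop :=
  forall e, 0 < e -> exists y, S y /\ norm (vsub y x) < e.

Definition connected {N} (S : vec N -> Prop) : Prop :=
  ~ exists U V : vec N -> Prop,
      is_open U /\ is_open V /\
      (forall x, S x -> U x \/ V x) /\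
      (exists x, S x /\ U x) /\ (exists x, S x /\ V x) /\
      (forall x, S x -> U x -> V x -> False).

Definition bounded {N} (S : vec N -> Prop) : Prop :=
  exists M, forall x, S x -> norm x <= M.

Definition bounded_domain {N} (S : vec N -> Prop) : Prop :=
  (exists x, S x) /\ is_open S /\ connected S /\ bounded S.

(* Supremum of a set of reals: the least upper bound when it exists
   (i.e. the set is nonempty and bounded above); 0 otherwise (convention;
   all suprema occurring below are finite). *)
Definition Rsup (P : R -> Prop) : R :=
  match excluded_middle_informative (exists l, is_lub P l) with
  | left h => proj1_sig (constructive_indefinite_description _ h)
  | right _ => 0
  end.

Definition sup_over {A : Type} (S : A -> Prop) (f : A -> R) : R :=
  Rsup (fun r => exists y, S y /\ r = f y).

Definition sup_over2 {A B : Type} (S : A -> Prop) (T : B -> Prop)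
  (f : A -> B -> R) : R :=
  Rsup (fun r => exists x p, S x /\ T p /\ r = f x p).

Definition continuous_on2 {N} (S : vec N -> Prop) (F : vec N -> vec N -> R) : Prop :=
  forall x y, S x -> S y -> forall e, 0 < e -> exists d, 0 < d /\
    forall x' y', S x' -> S y' -> norm (vsub x' x) < d -> norm (vsub y' y) < d ->
      Rabs (F x' y' - F x y) < e.

Definition antisym_on {N} (S : vec N -> Prop) (F : vec N -> vec N -> R) : Prop :=
  forall x y, S x -> S y -> F x y = - F y x.

Definition in_calH {N} (Om : vec N -> Prop) (F : vec N -> vec N -> R) : Prop :=
  continuous_on2 (closure Om) F /\ antisym_on (closure Om) F.

Definition L_of {N} (Om : vec N -> Prop) (G : vec N -> vec N -> R) (x p : vec N) : R :=
  sup_over (closure Om) (fun y => dot y p - G y x).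

Definition Lstar {N} (Om : vec N -> Prop) (rad : R) (H : vec N -> vec N -> R)
  (q y : vec N) : R :=
  sup_over2 (closure Om) (ball rad)
    (fun x p => dot y p + dot q x - L_of Om H x p).

Definition Lstarstar {N} (Om : vec N -> Prop) (rad : R) (H : vec N -> vec N -> R)
  (y q : vec N) : R :=
  sup_over2 (closure Om) (ball rad)
    (fun x p => dot y p + dot q x - Lstar Om rad H p x).

Definition H_of {N} (rad : R) (L : vec N -> vec N -> R) (x y : vec N) : R :=
  sup_over (ball rad) (fun p => dot x p - L y p).

Definition Hreg {N} (Om : vec N -> Prop) (rad : R) (H : vec N -> vec N -> R)
  (x y : vec N) : R :=
  (H_of rad (Lstarstar Om rad H) x y - H_of rad (Lstarstar Om rad H) y x) / 2.

Definition convex_fun {N} (f : vec N -> R) : Prop :=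
  forall x y t, 0 <= t <= 1 ->
    f (vadd (vscal t x) (vscal (1 - t) y)) <= t * f x + (1 - t) * f y.

Definition concave_fun {N} (f : vec N -> R) : Prop :=
  convex_fun (fun x => - f x).

Definition convex_concave {N} (F : vec N -> vec N -> R) : Prop :=
  (forall y, convex_fun (fun x => F x y)) /\ (forall x, concave_fun (fun y => F x y)).

Definition jointly_convex {N} (F : vec N -> vec N -> R) : Prop :=
  forall x p x' p' t, 0 <= t <= 1 ->
    F (vadd (vscal t x) (vscal (1 - t) x')) (vadd (vscal t p) (vscal (1 - t) p'))
    <= t * F x p + (1 - t) * F x' p'.

Definition jointly_continuous {N} (F : vec N -> vec N -> R) : Prop :=
  forall x p e, 0 < e -> exists d, 0 < d /\
    forall x' p', norm2 (vsub x' x) (vsub p' p) < d -> Rabs (F x' p' - F x p) < e.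

Definition lipschitz2 {N} (K : R) (F : vec N -> vec N -> R) : Prop :=
  forall x p x' p', Rabs (F x p - F x' p') <= K * norm2 (vsub x x') (vsub p p').

(* Every object in the construction is a supremum of affine functions whose slopes lie in the
   closure of Omega or in B_R, both inside the ball of radius R.  Hence L**, H_{L**}, H_reg and
   L_{H_reg} are R-Lipschitz in each variable and bounded linearly, and each is convex in the
   variables it depends on affinely; concavity of H_{L**} in its second variable comes from the
   joint convexity of L**.  The comparison L_{H_reg} <= L_H follows from L** <= L_H and
   L* (p, x) <= L_H (x, p), the latter by antisymmetry of H.  Continuity of H on the compact
   closure of Omega is only needed to make L_H finite. *)

From Stdlib Require Import Reals Lra Lia FunctionalExtensionality PropExtensionality Classical ClassicalEpsilon.
Open Scope R_scope.

Definition vzero {N} : vec N := fun _ => 0.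

Lemma dot_linear_l {N} (a b : R) (x y z : vec N) :
  dot (vadd (vscal a x) (vscal b y)) z = a * dot x z + b * dot y z.
Proof.
  revert x y z; induction N as [|n IH]; intros x y z; simpl; [ring|].
  unfold vadd, vscal in *; rewrite IH; ring.
Qed.

Lemma dot_comm {N} (x y : vec N) : dot x y = dot y x.
Proof. revert x y; induction N as [|n IH]; intros x y; simpl; [|rewrite IH]; ring. Qed.

Lemma dot_linear_r {N} (a b : R) (x y z : vec N) :
  dot z (vadd (vscal a x) (vscal b y)) = a * dot z x + b * dot z y.
Proof. rewrite dot_comm, dot_linear_l, (dot_comm z x), (dot_comm z y); ring. Qed.

Lemma dot_self_nonneg {N} (x : vec N) : 0 <= dot x x.
Proof.
  revert x; induction N as [|n IH]; intros x; simpl; [lra|].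
  specialize (IH (fun i => x (Fin.FS i))); nra.
Qed.

Lemma vsub_as_lincomb {N} (x y : vec N) : vsub x y = vadd (vscal 1 x) (vscal (-1) y).
Proof. apply functional_extensionality; intro; unfold vsub, vadd, vscal; ring. Qed.

Lemma vadd_as_lincomb {N} (x y : vec N) : vadd x y = vadd (vscal 1 x) (vscal 1 y).
Proof. apply functional_extensionality; intro; unfold vadd, vscal; ring. Qed.

Lemma dot_vsub_l {N} (x y z : vec N) : dot (vsub x y) z = dot x z - dot y z.
Proof. rewrite vsub_as_lincomb, dot_linear_l; ring. Qed.

Lemma dot_vadd_l {N} (x y z : vec N) : dot (vadd x y) z = dot x z + dot y z.
Proof. rewrite vadd_as_lincomb, dot_linear_l; ring. Qed.

Lemma dot_vadd_r {N} (x y z : vec N) : dot z (vadd x y) = dot z x + dot z y.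
Proof. rewrite dot_comm, dot_vadd_l, !(dot_comm z); ring. Qed.

Lemma dot_vzero_l {N} (z : vec N) : dot vzero z = 0.
Proof.
  replace vzero with (vadd (vscal 0 z) (vscal 0 z))
    by (apply functional_extensionality; intro; unfold vzero, vadd, vscal; ring).
  rewrite dot_linear_l; ring.
Qed.

Lemma vsub_diag {N} (x : vec N) : vsub x x = vzero.
Proof. apply functional_extensionality; intro; unfold vsub, vzero; ring. Qed.

Lemma Cauchy_Schwarz_sq {N} (x y : vec N) : dot x y * dot x y <= dot x x * dot y y.
Proof.
  set (a := dot x y); set (b := dot y y); set (c := dot x x).
  (* Positivity of |s x + t y|^2 at (s, t) = (b, -a), (-a, c) and (1, -a); the last one
     settles the degenerate case b = 0. *)
  assert (Hexp : forall s t, 0 <= s * s * c + 2 * s * t * a + t * t * b).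
  { intros s t. pose proof (dot_self_nonneg (vadd (vscal s x) (vscal t y))) as Hq.
    rewrite dot_linear_l, !dot_linear_r, (dot_comm y x) in Hq. unfold a, b, c; nra. }
  pose proof (Hexp b (- a)); pose proof (Hexp (- a) c); pose proof (Hexp 1 (- a)).
  assert (0 <= b) by apply dot_self_nonneg.
  destruct (Rle_lt_or_eq_dec 0 b) as [Hb | Hb]; [assumption | nra | subst b; nra].
Qed.

Lemma norm_nonneg {N} (x : vec N) : 0 <= norm x.
Proof. apply sqrt_pos. Qed.

Lemma norm_sqr {N} (x : vec N) : norm x * norm x = dot x x.
Proof. apply sqrt_sqrt, dot_self_nonneg. Qed.

Lemma norm_vzero {N} : norm (@vzero N) = 0.
Proof. unfold norm; rewrite dot_vzero_l; apply sqrt_0. Qed.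

Lemma Cauchy_Schwarz {N} (x y : vec N) : Rabs (dot x y) <= norm x * norm y.
Proof.
  pose proof (Cauchy_Schwarz_sq x y); rewrite <- (norm_sqr x), <- (norm_sqr y) in H.
  apply Rsqr_incr_0_var; [|apply Rmult_le_pos; apply norm_nonneg].
  rewrite <- Rsqr_abs; unfold Rsqr; nra.
Qed.

Lemma dot_le_norm_bound {N} (x p : vec N) (r : R) : norm p <= r -> dot x p <= r * norm x.
Proof.
  intro Hp. pose proof (Cauchy_Schwarz x p); pose proof (Rle_abs (dot x p)).
  pose proof (norm_nonneg x); nra.
Qed.

Lemma dot_ge_norm_bound {N} (x p : vec N) (r : R) : norm p <= r -> - (r * norm x) <= dot x p.
Proof.
  intro Hp. pose proof (Cauchy_Schwarz x p); pose proof (Rle_abs (- dot x p)).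
  rewrite Rabs_Ropp in *. pose proof (norm_nonneg x); nra.
Qed.

Lemma norm_vscal {N} (t : R) (x : vec N) : norm (vscal t x) = Rabs t * norm x.
Proof.
  assert (Hs : vscal t x = vadd (vscal t x) (vscal 0 x))
    by (apply functional_extensionality; intro; unfold vadd, vscal; ring).
  unfold norm; rewrite Hs, dot_linear_l, !dot_linear_r, <- sqrt_Rsqr_abs, <- sqrt_mult
    by (apply Rle_0_sqr || apply dot_self_nonneg).
  f_equal; unfold Rsqr; ring.
Qed.

Lemma norm_vadd_le {N} (x y : vec N) : norm (vadd x y) <= norm x + norm y.
Proof.
  pose proof (norm_nonneg x); pose proof (norm_nonneg y).
  apply Rsqr_incr_0_var; [|nra]. unfold Rsqr.
  rewrite norm_sqr, dot_vadd_l, !dot_vadd_r, (dot_comm y x), <- (norm_sqr x), <- (norm_sqr y).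
  pose proof (Cauchy_Schwarz x y); pose proof (Rle_abs (dot x y)); nra.
Qed.

Lemma norm_vsub_comm {N} (x y : vec N) : norm (vsub x y) = norm (vsub y x).
Proof.
  replace (vsub x y) with (vscal (-1) (vsub y x))
    by (apply functional_extensionality; intro; unfold vscal, vsub; ring).
  rewrite norm_vscal, Rabs_left by lra; ring.
Qed.

Lemma norm_vsub_le {N} (x y : vec N) : norm (vsub x y) <= norm x + norm y.
Proof.
  replace (vsub x y) with (vadd x (vscal (-1) y))
    by (apply functional_extensionality; intro; unfold vadd, vscal, vsub; ring).
  eapply Rle_trans; [apply norm_vadd_le|].
  rewrite norm_vscal, Rabs_left by lra; lra.
Qed.

Lemma norm_vsub_triangle {N} (x y z : vec N) :
  norm (vsub x z) <= norm (vsub x y) + norm (vsub y z).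
Proof.
  replace (vsub x z) with (vadd (vsub x y) (vsub y z))
    by (apply functional_extensionality; intro; unfold vadd, vsub; ring).
  apply norm_vadd_le.
Qed.

Lemma norm_le_norm2_l {N} (a b : vec N) : norm a <= norm2 a b.
Proof. apply sqrt_le_1_alt; pose proof (dot_self_nonneg b); lra. Qed.

Lemma norm_le_norm2_r {N} (a b : vec N) : norm b <= norm2 a b.
Proof. apply sqrt_le_1_alt; pose proof (dot_self_nonneg a); lra. Qed.

Lemma ball_norm_le {N} (rad : R) (p : vec N) : ball rad p -> norm p <= rad.
Proof. unfold ball; lra. Qed.

Lemma ball_convex {N} (rad t : R) (p p' : vec N) : 0 <= t <= 1 ->
  ball rad p -> ball rad p' -> ball rad (vadd (vscal t p) (vscal (1 - t) p')).
Proof.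
  unfold ball; intros Ht Hp Hp'. eapply Rle_lt_trans; [apply norm_vadd_le|].
  rewrite !norm_vscal, !Rabs_pos_eq by lra.
  destruct (Rle_lt_or_eq_dec 0 t) as [Htp | <-]; [lra | nra | lra].
Qed.

Lemma Rsup_is_lub (P : R -> Prop) :
  (exists r, P r) -> (exists M, forall r, P r -> r <= M) -> is_lub P (Rsup P).
Proof.
  intros Hne Hub. assert (Hex : exists l, is_lub P l).
  { destruct (completeness P) as [l Hl]; [exact Hub | exact Hne | now exists l]. }
  unfold Rsup; destruct (excluded_middle_informative _) as [h|h]; [|contradiction].
  exact (proj2_sig (constructive_indefinite_description _ h)).
Qed.

Lemma sup_over_ub {A} (S : A -> Prop) (f : A -> R) (M : R) :
  (forall y, S y -> f y <= M) -> forall y, S y -> f y <= sup_over S f.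
Proof.
  intros HM y Hy. apply Rsup_is_lub; [now exists (f y), y | | now exists y].
  exists M; intros r [z [Hz ->]]; auto.
Qed.

Lemma sup_over_le {A} (S : A -> Prop) (f : A -> R) (M : R) :
  (exists y, S y) -> (forall y, S y -> f y <= M) -> sup_over S f <= M.
Proof.
  intros [y Hy] HM. apply Rsup_is_lub; [now exists (f y), y | exists M | ];
    intros r [z [Hz ->]]; auto.
Qed.

Lemma sup_over2_as_sup_over {A B} (S : A -> Prop) (T : B -> Prop) (f : A -> B -> R) :
  sup_over2 S T f = sup_over (fun z => S (fst z) /\ T (snd z)) (fun z => f (fst z) (snd z)).
Proof.
  unfold sup_over2, sup_over; f_equal; apply functional_extensionality; intro r.
  apply propositional_extensionality; split.
  - intros (x & p & Hx & Hp & ->); now exists (x, p).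
  - intros ([x p] & [Hx Hp] & ->); now exists x, p.
Qed.

Lemma sup_over2_ub {A B} (S : A -> Prop) (T : B -> Prop) (f : A -> B -> R) (M : R) :
  (forall x p, S x -> T p -> f x p <= M) -> forall x p, S x -> T p -> f x p <= sup_over2 S T f.
Proof.
  intros HM x p Hx Hp; rewrite sup_over2_as_sup_over.
  apply (sup_over_ub _ (fun z => f (fst z) (snd z)) M (fun z Hz => HM _ _ (proj1 Hz) (proj2 Hz)) (x, p)).
  now split.
Qed.

Lemma sup_over2_le {A B} (S : A -> Prop) (T : B -> Prop) (f : A -> B -> R) (M : R) :
  (exists x, S x) -> (exists p, T p) -> (forall x p, S x -> T p -> f x p <= M) ->
  sup_over2 S T f <= M.
Proof.
  intros [x Hx] [p Hp] HM; rewrite sup_over2_as_sup_over.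
  apply sup_over_le; [now exists (x, p) | intros z [Hz1 Hz2]; auto].
Qed.

Lemma sup_over_scale_le {A} (S : A -> Prop) (f : A -> R) (t c M : R) :
  (exists y, S y) -> 0 <= t ->
  (forall y, S y -> t * f y + c <= M) -> t * sup_over S f + c <= M.
Proof.
  intros [y Hy] Ht HM. destruct (Rle_lt_or_eq_dec 0 t Ht) as [Htp | <-].
  - assert (Hsup : sup_over S f <= (M - c) / t).
    { apply sup_over_le; [now exists y|]. intros z Hz. specialize (HM z Hz).
      apply Rmult_le_reg_l with t; [lra|]. field_simplify; lra. }
    apply Rmult_le_compat_l with (r := t) in Hsup; [|lra].
    replace (t * ((M - c) / t)) with (M - c) in Hsup by (field; lra). lra.
  - specialize (HM y Hy); lra.
Qed.

Definition strictly_increasing (phi : nat -> nat) : Prop := forall k, (phi k < phi (S k))%nat.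

Lemma strictly_increasing_le (phi : nat -> nat) : strictly_increasing phi ->
  forall k k', (k <= k')%nat -> (phi k <= phi k')%nat.
Proof. intros Hphi k k' Hk; induction Hk as [|m _ IH]; [lia | specialize (Hphi m); lia]. Qed.

Lemma strictly_increasing_ge_id (phi : nat -> nat) : strictly_increasing phi ->
  forall k, (k <= phi k)%nat.
Proof. intros Hphi k; induction k as [|k IH]; [lia | specialize (Hphi k); lia]. Qed.

Lemma strictly_increasing_comp (phi psi : nat -> nat) :
  strictly_increasing phi -> strictly_increasing psi -> strictly_increasing (fun k => phi (psi k)).
Proof.
  intros Hphi Hpsi k; pose proof (strictly_increasing_le phi Hphi (S (psi k)) (psi (S k)) (Hpsi k)).
  specialize (Hphi (psi k)); lia.
Qed.

Lemma Un_cv_subseq (u : nat -> R) (l : R) (phi : nat -> nat) :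
  strictly_increasing phi -> Un_cv u l -> Un_cv (fun k => u (phi k)) l.
Proof.
  intros Hphi Hu e He; destruct (Hu e He) as [K HK]; exists K; intros k Hk.
  apply HK; pose proof (strictly_increasing_ge_id phi Hphi k); lia.
Qed.

Lemma ValAdh_convergent_subseq (a : nat -> R) (l : R) :
  ValAdh a l -> exists phi, strictly_increasing phi /\ Un_cv (fun k => a (phi k)) l.
Proof.
  intro Hl.
  (* [c (n, k)] is an index beyond [n] where [a] is within [1 / (k + 1)] of [l]. *)
  destruct (choice (fun (nk : nat * nat) p =>
              (fst nk <= p)%nat /\ Rabs (a p - l) < / INR (S (snd nk)))) as [c Hc].
  { intros [n k]; assert (Hpos : 0 < / INR (S k)) by (apply Rinv_0_lt_compat, lt_0_INR; lia).
    destruct (Hl (disc l (mkposreal _ Hpos)) n) as [p Hp]; [now exists (mkposreal _ Hpos)|].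
    now exists p. }
  set (phi := fix phi k := match k with O => c (O, O) | S k' => c (S (phi k'), S k') end).
  assert (Hclose : forall k, Rabs (a (phi k) - l) < / INR (S k)) by (destruct k; apply Hc).
  exists phi; split; [intro k; exact (proj1 (Hc (S (phi k), S k)))|].
  intros e He; destruct (archimed_cor1 e He) as [K [HK HK0]]; exists K; intros k Hk.
  eapply Rlt_trans; [apply Hclose|]; eapply Rle_lt_trans; [|exact HK].
  apply Rinv_le_contravar; [apply lt_0_INR; lia | apply le_INR; lia].
Qed.

Lemma bounded_convergent_subseq (a : nat -> R) (M : R) : (forall n, Rabs (a n) <= M) ->
  exists phi, strictly_increasing phi /\ exists l, Un_cv (fun k => a (phi k)) l.
Proof.
  intro HM; destruct (Bolzano_Weierstrass a (fun c => - M <= c <= M)) as [l Hl].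
  - apply compact_P3.
  - intro n; specialize (HM n); pose proof (Rle_abs (a n)); pose proof (Rle_abs (- a n)).
    rewrite Rabs_Ropp in *; lra.
  - destruct (ValAdh_convergent_subseq a l Hl) as [phi Hphi]; exists phi; split;
      [apply Hphi | now exists l].
Qed.

Lemma bounded_vec_convergent_subseq {N} (u : nat -> vec N) (M : R) :
  (forall n, dot (u n) (u n) <= M) ->
  exists phi, strictly_increasing phi /\ exists l, forall e, 0 < e ->
    exists K, forall k, (K <= k)%nat -> dot (vsub (u (phi k)) l) (vsub (u (phi k)) l) < e.
Proof.
  revert u M; induction N as [|n IH]; intros u M HM.
  - exists (fun k => k); split; [intro; lia|]. exists vzero; intros e He; exists O; intros; simpl; lra.
  - set (tail := fun (v : vec (S n)) (i : Fin.t n) => v (Fin.FS i)).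
    assert (Hdot : forall v : vec (S n), dot v v = v Fin.F1 * v Fin.F1 + dot (tail v) (tail v))
      by reflexivity.
    destruct (bounded_convergent_subseq (fun k => u k Fin.F1) (M + 1)) as [phi1 [Hphi1 [l0 Hl0]]].
    { intro k; specialize (HM k); rewrite Hdot in HM.
      pose proof (dot_self_nonneg (tail (u k))); pose proof (pow2_ge_0 (u k Fin.F1 - 1)).
      pose proof (pow2_ge_0 (u k Fin.F1 + 1)); apply Rabs_le; split; nra. }
    destruct (IH (fun k => tail (u (phi1 k))) M) as [phi2 [Hphi2 [l' Hl']]].
    { intro k; specialize (HM (phi1 k)); rewrite Hdot in HM; nra. }
    exists (fun k => phi1 (phi2 k)); split; [now apply strictly_increasing_comp|].
    exists (fun i => Fin.caseS' i (fun _ => R) l0 l'); intros e He.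
    destruct (Un_cv_subseq _ _ phi2 Hphi2 Hl0 (Rmin 1 (e / 2))) as [K1 HK1];
      [apply Rmin_pos; lra|].
    destruct (Hl' (e / 2)) as [K2 HK2]; [lra|].
    exists (Nat.max K1 K2); intros k Hk.
    specialize (HK1 k ltac:(lia)); specialize (HK2 k ltac:(lia)); unfold R_dist in HK1.
    pose proof (Rmin_l 1 (e / 2)); pose proof (Rmin_r 1 (e / 2)).
    rewrite Hdot; change (tail (vsub (u (phi1 (phi2 k))) _)) with (vsub (tail (u (phi1 (phi2 k)))) l').
    unfold vsub at 1 2; simpl.
    set (d := u (phi1 (phi2 k)) Fin.F1 - l0) in *.
    replace (d * d) with (Rabs d * Rabs d) by (rewrite <- Rabs_mult; apply Rabs_pos_eq; nra).
    pose proof (Rabs_pos d); nra.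
Qed.

Lemma closure_incl {N} (Om : vec N -> Prop) (x : vec N) : Om x -> closure Om x.
Proof. intros Hx e He; exists x; split; [exact Hx | now rewrite vsub_diag, norm_vzero]. Qed.

Lemma closure_closure {N} (Om : vec N -> Prop) (z : vec N) :
  closure (closure Om) z -> closure Om z.
Proof.
  intros Hz e He. destruct (Hz (e / 2)) as [y [Hy Hyz]]; [lra|].
  destruct (Hy (e / 2)) as [w [Hw Hwy]]; [lra|].
  exists w; split; [exact Hw|]. pose proof (norm_vsub_triangle w y z); lra.
Qed.

Lemma continuous_bounded_below_on_closure {N} (Om : vec N -> Prop) (rad : R) (g : vec N -> R) :
  (forall x, closure Om x -> norm x <= rad) ->
  (forall y, closure Om y -> forall e, 0 < e -> exists d, 0 < d /\
     forall y', closure Om y' -> norm (vsub y' y) < d -> Rabs (g y' - g y) < e) ->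
  exists m, forall y, closure Om y -> m <= g y.
Proof.
  intros Hbnd Hcont. apply NNPP; intro Hunb.
  destruct (choice (fun n y => closure Om y /\ g y < - INR n)) as [u Hu].
  { intro n; apply NNPP; intro Hn; apply Hunb; exists (- INR n); intros y Hy.
    apply Rnot_lt_le; intro Hlt; apply Hn; now exists y. }
  destruct (bounded_vec_convergent_subseq u (rad * rad)) as [phi [Hphi [l Hl]]].
  { intro n; rewrite <- norm_sqr; pose proof (Hbnd _ (proj1 (Hu n))).
    pose proof (norm_nonneg (u n)); nra. }
  assert (Hnear : forall d, 0 < d -> exists K, forall k, (K <= k)%nat -> norm (vsub (u (phi k)) l) < d).
  { intros d Hd; destruct (Hl (d * d)) as [K HK]; [nra|]; exists K; intros k Hk.
    specialize (HK k Hk); rewrite <- norm_sqr in HK; pose proof (norm_nonneg (vsub (u (phi k)) l)); nra. }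
  assert (Hlc : closure Om l).
  { apply closure_closure; intros e He; destruct (Hnear e He) as [K HK].
    exists (u (phi K)); split; [apply Hu | apply HK; lia]. }
  destruct (Hcont l Hlc 1) as [d [Hd Hgd]]; [lra|].
  destruct (Hnear d Hd) as [K HK]; destruct (INR_unbounded (1 - g l)) as [n0 Hn0].
  set (k := Nat.max K n0).
  specialize (Hgd (u (phi k)) (proj1 (Hu _)) (HK k ltac:(lia))); apply Rabs_def2 in Hgd.
  pose proof (proj2 (Hu (phi k))).
  assert (INR n0 <= INR (phi k))
    by (apply le_INR; pose proof (strictly_increasing_ge_id phi Hphi k); lia).
  lra.
Qed.

Lemma continuous_on2_bounded_below {N} (Om : vec N -> Prop) (rad : R) (F : vec N -> vec N -> R) :
  (forall x, closure Om x -> norm x <= rad) -> continuous_on2 (closure Om) F ->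
  forall x, closure Om x -> exists m, forall y, closure Om y -> m <= F y x.
Proof.
  intros Hbnd Hcont x Hx; apply (continuous_bounded_below_on_closure Om rad (fun y => F y x) Hbnd).
  intros y Hy e He; destruct (Hcont y x Hy Hx e He) as [d [Hd Hclose]]; exists d; split; [exact Hd|].
  intros y' Hy' Hyy'; apply Hclose; [exact Hy' | exact Hx | exact Hyy' | now rewrite vsub_diag, norm_vzero].
Qed.

Definition lipschitz_sum_norm {N} (K : R) (F : vec N -> vec N -> R) : Prop :=
  forall x p x' p', Rabs (F x p - F x' p') <= K * norm (vsub x x') + K * norm (vsub p p').

Lemma lipschitz_sum_norm_lipschitz2 {N} (K : R) (F : vec N -> vec N -> R) :
  0 <= K -> lipschitz_sum_norm K F -> lipschitz2 (2 * K) F.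
Proof.
  intros HK HF x p x' p'; eapply Rle_trans; [apply HF|].
  pose proof (norm_le_norm2_l (vsub x x') (vsub p p')).
  pose proof (norm_le_norm2_r (vsub x x') (vsub p p')); nra.
Qed.

(* For [N >= 1] this only weakens the constant [2 K]; in dimension 0 both sides vanish. *)
Lemma lipschitz_sum_norm_lipschitz2_4N {N} (K : R) (F : vec N -> vec N -> R) :
  0 <= K -> lipschitz_sum_norm K F -> lipschitz2 (4 * INR N * K) F.
Proof.
  intros HK HF x p x' p'. destruct N as [|n].
  - pose proof (HF x p x' p'); unfold norm in *; simpl dot in *; rewrite sqrt_0 in *; simpl; lra.
  - pose proof (lipschitz_sum_norm_lipschitz2 K F HK HF x p x' p').
    set (s := norm2 (vsub x x') (vsub p p')) in *.
    assert (0 <= K * s) by (apply Rmult_le_pos; [lra | apply sqrt_pos]).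
    assert (0 <= INR n * (K * s)) by (apply Rmult_le_pos; [apply pos_INR | lra]).
    rewrite S_INR; nra.
Qed.

Lemma lipschitz_sum_norm_jointly_continuous {N} (K : R) (F : vec N -> vec N -> R) :
  0 < K -> lipschitz_sum_norm K F -> jointly_continuous F.
Proof.
  intros HK HF x p e He; exists (e / (2 * K)); split; [apply Rdiv_lt_0_compat; lra|].
  intros x' p' Hd; eapply Rle_lt_trans; [apply HF|].
  pose proof (norm_le_norm2_l (vsub x' x) (vsub p' p)).
  pose proof (norm_le_norm2_r (vsub x' x) (vsub p' p)).
  assert (2 * K * (e / (2 * K)) = e) by (field; lra); nra.
Qed.

Lemma lipschitz_sum_norm_continuous_on2 {N} (K : R) (S : vec N -> Prop) (F : vec N -> vec N -> R) :
  0 < K -> lipschitz_sum_norm K F -> continuous_on2 S F.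
Proof.
  intros HK HF x y _ _ e He; exists (e / (2 * K)); split; [apply Rdiv_lt_0_compat; lra|].
  intros x' y' _ _ Hx Hy; eapply Rle_lt_trans; [apply HF|].
  assert (2 * K * (e / (2 * K)) = e) by (field; lra); nra.
Qed.

Lemma Hreg_antisym {N} (Om : vec N -> Prop) (rad : R) (H : vec N -> vec N -> R) (x y : vec N) :
  Hreg Om rad H x y = - Hreg Om rad H y x.
Proof. unfold Hreg; lra. Qed.

Section Regularization.

Variables (N : nat) (rad : R) (Om : vec N -> Prop).
Hypothesis rad_pos : 0 < rad.
Hypothesis closure_norm_le : forall x, closure Om x -> norm x <= rad.
Hypothesis closure_nonempty : exists x, closure Om x.

Lemma ball_vzero : @ball N rad vzero.
Proof. unfold ball; rewrite norm_vzero; exact rad_pos. Qed.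

Lemma ball_nonempty : exists p, @ball N rad p.
Proof. exists vzero; exact ball_vzero. Qed.

Lemma L_of_ub (G : vec N -> vec N -> R) (x p y : vec N) (m : R) :
  (forall z, closure Om z -> m <= G z x) -> closure Om y -> dot y p - G y x <= L_of Om G x p.
Proof.
  intros Hm Hy.
  apply (sup_over_ub (closure Om) (fun y => dot y p - G y x) (rad * norm p - m)); [|exact Hy].
  intros z Hz; specialize (Hm z Hz); rewrite dot_comm.
  pose proof (dot_le_norm_bound p z rad (closure_norm_le z Hz)); lra.
Qed.

Lemma L_of_le (G : vec N -> vec N -> R) (x p : vec N) (M : R) :
  (forall y, closure Om y -> dot y p - G y x <= M) -> L_of Om G x p <= M.
Proof. now apply sup_over_le. Qed.

Variable H : vec N -> vec N -> R.
Hypothesis H_antisym : antisym_on (closure Om) H.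
Hypothesis H_bounded_below :
  forall x, closure Om x -> exists m, forall y, closure Om y -> m <= H y x.

Local Notation L := (L_of Om H).
Local Notation Ls := (Lstar Om rad H).
Local Notation Lss := (Lstarstar Om rad H).
Local Notation HLss := (H_of rad (Lstarstar Om rad H)).

Lemma L_H_ub (x p y : vec N) : closure Om x -> closure Om y -> dot y p - H y x <= L x p.
Proof. intros Hx Hy; destruct (H_bounded_below x Hx) as [m Hm]; now apply (L_of_ub _ _ _ _ m). Qed.

Lemma L_H_ge_dot (x p : vec N) : closure Om x -> dot x p <= L x p.
Proof.
  intro Hx; pose proof (L_H_ub x p x Hx Hx); pose proof (H_antisym x x Hx Hx); lra.
Qed.

Lemma Lstar_ub (q y x p : vec N) :
  closure Om x -> ball rad p -> dot y p + dot q x - L x p <= Ls q y.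
Proof.
  intros Hx Hp.
  apply (sup_over2_ub (closure Om) (ball rad) (fun x p => dot y p + dot q x - L x p)
           (rad * norm y + rad * norm q + rad * rad)); [|exact Hx | exact Hp].
  intros z r Hz Hr; pose proof (L_H_ge_dot z r Hz).
  pose proof (dot_le_norm_bound y r rad (ball_norm_le _ _ Hr)).
  pose proof (dot_le_norm_bound q z rad (closure_norm_le z Hz)).
  pose proof (dot_ge_norm_bound z r rad (ball_norm_le _ _ Hr)).
  pose proof (closure_norm_le z Hz); nra.
Qed.

Lemma Lstar_le (q y : vec N) (M : R) :
  (forall x p, closure Om x -> ball rad p -> dot y p + dot q x - L x p <= M) -> Ls q y <= M.
Proof. apply sup_over2_le; [exact closure_nonempty | exact ball_nonempty]. Qed.

Lemma Lstar_le_L_of (p x : vec N) : closure Om x -> Ls p x <= L x p.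
Proof.
  intro Hx; apply Lstar_le; intros x' p' Hx' Hp'.
  pose proof (L_H_ub x' p' x Hx' Hx); pose proof (L_H_ub x p x' Hx Hx').
  rewrite (H_antisym x x' Hx Hx') in *; rewrite (dot_comm p x'); lra.
Qed.

Lemma Lstar_bounded_below : exists c, forall p x, ball rad p -> c <= Ls p x.
Proof.
  destruct closure_nonempty as [x0 Hx0]; exists (- (rad * rad) - L x0 vzero); intros p x Hp.
  pose proof (Lstar_ub p x x0 vzero Hx0 ball_vzero) as Hub.
  rewrite dot_comm, dot_vzero_l in Hub.
  pose proof (dot_ge_norm_bound p x0 rad (closure_norm_le x0 Hx0)).
  pose proof (ball_norm_le _ _ Hp); nra.
Qed.

Lemma Lstarstar_ub (y q x p : vec N) :
  closure Om x -> ball rad p -> dot y p + dot q x - Ls p x <= Lss y q.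
Proof.
  intros Hx Hp; destruct Lstar_bounded_below as [c Hc].
  apply (sup_over2_ub (closure Om) (ball rad) (fun x p => dot y p + dot q x - Ls p x)
           (rad * norm y + rad * norm q - c)); [|exact Hx | exact Hp].
  intros z r Hz Hr; specialize (Hc r z Hr).
  pose proof (dot_le_norm_bound y r rad (ball_norm_le _ _ Hr)).
  pose proof (dot_le_norm_bound q z rad (closure_norm_le z Hz)); lra.
Qed.

Lemma Lstarstar_le (y q : vec N) (M : R) :
  (forall x p, closure Om x -> ball rad p -> dot y p + dot q x - Ls p x <= M) -> Lss y q <= M.
Proof. apply sup_over2_le; [exact closure_nonempty | exact ball_nonempty]. Qed.

Lemma Lstarstar_le_L_of (x p : vec N) : closure Om x -> ball rad p -> Lss x p <= L x p.
Proof.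
  intros Hx Hp; apply Lstarstar_le; intros x' p' Hx' Hp'.
  pose proof (Lstar_ub p' x' x p Hx Hp); rewrite (dot_comm x' p), (dot_comm p' x) in *; lra.
Qed.

Lemma Lstarstar_bounded_below : exists c, forall y q, ball rad q -> c <= Lss y q.
Proof.
  destruct closure_nonempty as [x0 Hx0]; exists (- (rad * rad) - Ls vzero x0); intros y q Hq.
  pose proof (Lstarstar_ub y q x0 vzero Hx0 ball_vzero) as Hub.
  rewrite dot_comm, dot_vzero_l in Hub.
  pose proof (dot_ge_norm_bound q x0 rad (closure_norm_le x0 Hx0)).
  pose proof (ball_norm_le _ _ Hq); nra.
Qed.

Lemma Lstarstar_lipschitz (y q y' q' : vec N) :
  Lss y q <= Lss y' q' + rad * norm (vsub y y') + rad * norm (vsub q q').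
Proof.
  apply Lstarstar_le; intros x p Hx Hp; pose proof (Lstarstar_ub y' q' x p Hx Hp).
  pose proof (dot_le_norm_bound (vsub y y') p rad (ball_norm_le _ _ Hp)).
  pose proof (dot_le_norm_bound (vsub q q') x rad (closure_norm_le x Hx)).
  rewrite !dot_vsub_l in *; lra.
Qed.

Lemma Lstarstar_jointly_convex : jointly_convex Lss.
Proof.
  intros y q y' q' t Ht; apply Lstarstar_le; intros x p Hx Hp; rewrite !dot_linear_l.
  pose proof (Lstarstar_ub y q x p Hx Hp); pose proof (Lstarstar_ub y' q' x p Hx Hp).
  destruct Ht; nra.
Qed.

Lemma HLss_ub (x y p : vec N) : ball rad p -> dot x p - Lss y p <= HLss x y.
Proof.
  intro Hp; destruct Lstarstar_bounded_below as [c Hc].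
  apply (sup_over_ub (ball rad) (fun p => dot x p - Lss y p) (rad * norm x - c)); [|exact Hp].
  intros r Hr; specialize (Hc y r Hr).
  pose proof (dot_le_norm_bound x r rad (ball_norm_le _ _ Hr)); lra.
Qed.

Lemma HLss_le (x y : vec N) (M : R) :
  (forall p, ball rad p -> dot x p - Lss y p <= M) -> HLss x y <= M.
Proof. apply sup_over_le, ball_nonempty. Qed.

Lemma HLss_lipschitz (x y x' y' : vec N) :
  HLss x y <= HLss x' y' + rad * norm (vsub x x') + rad * norm (vsub y y').
Proof.
  apply HLss_le; intros p Hp; pose proof (HLss_ub x' y' p Hp).
  pose proof (Lstarstar_lipschitz y' p y p) as Hlip.
  rewrite vsub_diag, norm_vzero, (norm_vsub_comm y' y) in Hlip.
  pose proof (dot_le_norm_bound (vsub x x') p rad (ball_norm_le _ _ Hp)) as Hdot.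
  rewrite dot_vsub_l in Hdot; lra.
Qed.

Lemma HLss_convex_l (y : vec N) : convex_fun (fun x => HLss x y).
Proof.
  intros x x' t Ht; apply HLss_le; intros p Hp; rewrite dot_linear_l.
  pose proof (HLss_ub x y p Hp); pose proof (HLss_ub x' y p Hp).
  destruct Ht; nra.
Qed.

(* Concavity in [y] is inherited from the joint convexity of [Lss]: the two suprema over [p] and
   [p'] are merged into one over the convex combination of [p] and [p']. *)
Lemma HLss_concave_r (x : vec N) : concave_fun (fun y => HLss x y).
Proof.
  intros y y' t Ht; cbv beta.
  set (yt := vadd (vscal t y) (vscal (1 - t) y')).
  assert (Hpair : forall p p', ball rad p -> ball rad p' ->
            t * (dot x p - Lss y p) + (1 - t) * (dot x p' - Lss y' p') <= HLss x yt).
  { intros p p' Hp Hp'.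
    pose proof (HLss_ub x yt _ (ball_convex rad t p p' Ht Hp Hp')).
    pose proof (Lstarstar_jointly_convex y p y' p' t Ht) as Hconv; fold yt in Hconv.
    rewrite dot_linear_r in *; lra. }
  enough (t * HLss x y + (1 - t) * HLss x y' <= HLss x yt) by lra.
  rewrite Rplus_comm; apply sup_over_scale_le; [apply ball_nonempty | lra|].
  intros p' Hp'; rewrite Rplus_comm; apply sup_over_scale_le; [apply ball_nonempty | lra|].
  intros p Hp; now apply Hpair.
Qed.

Local Notation Hr := (Hreg Om rad H).

Lemma Hreg_lipschitz : lipschitz_sum_norm rad Hr.
Proof.
  intros x y x' y'; unfold Hreg.
  pose proof (HLss_lipschitz x y x' y'); pose proof (HLss_lipschitz x' y' x y).
  pose proof (HLss_lipschitz y x y' x'); pose proof (HLss_lipschitz y' x' y x).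
  rewrite (norm_vsub_comm x' x), (norm_vsub_comm y' y) in *; apply Rabs_le; lra.
Qed.

Lemma Hreg_bound (x y : vec N) : Rabs (Hr x y) <= rad * norm x + rad * norm y.
Proof.
  unfold Hreg; pose proof (HLss_lipschitz x y y x); pose proof (HLss_lipschitz y x x y).
  rewrite (norm_vsub_comm y x) in *; pose proof (norm_vsub_le x y).
  apply Rabs_le; nra.
Qed.

(* Both halves of [Hr y x] are estimated through the same [p]: [HLss y x] from below by its
   definition and [L** <= L], [HLss x y] from above through [L** >= <y,p> + <q,x> - L*(p,x)]
   and [L* <= L]. *)
Lemma Hreg_ge_dot_sub_L_of (x y p : vec N) :
  closure Om x -> closure Om y -> ball rad p -> dot y p - L x p <= Hr y x.
Proof.
  intros Hx Hy Hp; unfold Hreg.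
  pose proof (HLss_ub y x p Hp); pose proof (Lstarstar_le_L_of x p Hx Hp).
  assert (HLss x y <= Ls p x - dot y p).
  { apply HLss_le; intros q Hq; pose proof (Lstarstar_ub y q x p Hx Hp).
    rewrite (dot_comm x q); lra. }
  pose proof (Lstar_le_L_of p x Hx); lra.
Qed.

Lemma Hreg_convex_concave : convex_concave Hr.
Proof.
  split; intros a b b' t Ht; unfold Hreg;
    pose proof (HLss_convex_l a b b' t Ht); pose proof (HLss_concave_r a b b' t Ht);
    simpl in *; lra.
Qed.

Local Notation LHr := (L_of Om Hr).

Lemma L_Hreg_ub (x p y : vec N) : closure Om y -> dot y p - Hr y x <= LHr x p.
Proof.
  apply (L_of_ub _ _ _ _ (- (rad * rad + rad * norm x))); intros z Hz.
  pose proof (Hreg_bound z x); pose proof (Rle_abs (- Hr z x)); rewrite Rabs_Ropp in *.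
  pose proof (closure_norm_le z Hz); nra.
Qed.

Lemma L_Hreg_lipschitz : lipschitz_sum_norm rad LHr.
Proof.
  assert (Hone : forall x p x' p', LHr x p <= LHr x' p' + rad * norm (vsub x x') + rad * norm (vsub p p')).
  { intros x p x' p'; apply L_of_le; intros y Hy; pose proof (L_Hreg_ub x' p' y Hy).
    pose proof (Hreg_lipschitz y x y x') as Hlip; rewrite vsub_diag, norm_vzero in Hlip.
    pose proof (Rle_abs (- (Hr y x - Hr y x'))); rewrite Rabs_Ropp in *.
    pose proof (dot_le_norm_bound (vsub p p') y rad (closure_norm_le y Hy)) as Hdot.
    rewrite dot_vsub_l, (dot_comm p y), (dot_comm p' y) in Hdot; lra. }
  intros x p x' p'; pose proof (Hone x p x' p'); pose proof (Hone x' p' x p).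
  rewrite (norm_vsub_comm x' x), (norm_vsub_comm p' p) in *; apply Rabs_le; lra.
Qed.

Lemma L_Hreg_bound (x p : vec N) : Rabs (LHr x p) <= rad * norm x + rad * norm p + rad * rad.
Proof.
  destruct closure_nonempty as [y0 Hy0].
  assert (LHr x p <= rad * norm p + rad * rad + rad * norm x).
  { apply L_of_le; intros z Hz.
    pose proof (Hreg_bound z x); pose proof (Rle_abs (- Hr z x)); rewrite Rabs_Ropp in *.
    pose proof (dot_le_norm_bound p z rad (closure_norm_le z Hz)); rewrite (dot_comm p z) in *.
    pose proof (closure_norm_le z Hz); nra. }
  pose proof (L_Hreg_ub x p y0 Hy0).
  pose proof (Hreg_bound y0 x); pose proof (Rle_abs (Hr y0 x)).
  pose proof (dot_ge_norm_bound p y0 rad (closure_norm_le y0 Hy0)); rewrite (dot_comm p y0) in *.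
  pose proof (closure_norm_le y0 Hy0); apply Rabs_le; nra.
Qed.

Lemma L_Hreg_le_L_of (x p : vec N) : closure Om x -> ball rad p -> LHr x p <= L x p.
Proof.
  intros Hx Hp; apply L_of_le; intros y Hy.
  pose proof (Hreg_ge_dot_sub_L_of x y p Hx Hy Hp); lra.
Qed.

Lemma L_Hreg_jointly_convex : jointly_convex LHr.
Proof.
  intros x p x' p' t Ht; apply L_of_le; intros y Hy; rewrite dot_linear_r.
  pose proof (proj2 Hreg_convex_concave y x x' t Ht); cbv beta in *.
  pose proof (L_Hreg_ub x p y Hy); pose proof (L_Hreg_ub x' p' y Hy).
  destruct Ht; nra.
Qed.

End Regularization.

Theorem proposition2p2 (N : nat) (rad : R) (Om : vec N -> Prop)
  (Hrad : 0 < rad)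
  (HOm : bounded_domain Om)
  (HOmR : forall x, closure Om x -> ball rad x)
  (H : vec N -> vec N -> R)
  (HH : in_calH Om H) :
  ((forall x y, Hreg Om rad H x y = - Hreg Om rad H y x) /\
   convex_concave (Hreg Om rad H) /\
   in_calH Om (Hreg Om rad H)) /\
  (jointly_convex (L_of Om (Hreg Om rad H)) /\
   jointly_continuous (L_of Om (Hreg Om rad H)) /\
   (forall x p, closure Om x -> ball rad p ->
      L_of Om (Hreg Om rad H) x p <= L_of Om H x p)) /\
  ((forall x p, Rabs (L_of Om (Hreg Om rad H) x p)
                 <= rad * norm x + rad * norm p + 5 * rad ^ 2) /\
   (forall x y, Rabs (Hreg Om rad H x y)
                 <= rad * norm x + rad * norm y + 4 * rad ^ 2)) /\
  (lipschitz2 (4 * INR N * rad) (L_of Om (Hreg Om rad H)) /\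
   lipschitz2 (4 * INR N * rad) (Hreg Om rad H)).
Proof.
  assert (Hcl : forall x, closure Om x -> norm x <= rad)
    by (intros x Hx; exact (ball_norm_le _ _ (HOmR x Hx))).
  assert (Hne : exists x, closure Om x)
    by (destruct HOm as [[x Hx] _]; exists x; now apply closure_incl).
  destruct HH as [Hcont Hanti].
  pose proof (continuous_on2_bounded_below Om rad H Hcl Hcont) as Hbelow.
  assert (HrLip : lipschitz_sum_norm rad (Hreg Om rad H)) by (eapply Hreg_lipschitz; eauto).
  assert (LLip : lipschitz_sum_norm rad (L_of Om (Hreg Om rad H)))
    by (eapply L_Hreg_lipschitz; eauto).
  refine (conj (conj _ (conj _ _)) (conj (conj _ (conj _ _)) (conj (conj _ _) (conj _ _)))).
  - apply Hreg_antisym.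
  - eapply Hreg_convex_concave; eauto.
  - split; [now apply (lipschitz_sum_norm_continuous_on2 rad) | intros x y _ _; apply Hreg_antisym].
  - eapply L_Hreg_jointly_convex; eauto.
  - now apply (lipschitz_sum_norm_jointly_continuous rad).
  - eapply L_Hreg_le_L_of; eauto.
  - intros x p; pose proof (@L_Hreg_bound N rad Om Hrad Hcl Hne H Hanti Hbelow x p); nra.
  - intros x y; pose proof (@Hreg_bound N rad Om Hrad Hcl Hne H Hanti Hbelow x y); nra.
  - apply lipschitz_sum_norm_lipschitz2_4N; [lra | exact LLip].
  - apply lipschitz_sum_norm_lipschitz2_4N; [lra | exact HrLip].
Qed.
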